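(* Let $n\geq 3$ and let $\mathcal{T}'\subseteq\mathcal{T}_n$ be such that for every $T\in\mathcal{T}_n$ there exists $T'\in\mathcal{T}'$ with $T\rhd T'$. Then $\chi(\mathrm{KG}(\mathcal{T}'))=n-2$.
   Context: Label the vertices of a convex $n$-gon by $1,\dots,n$ in cyclic order; $\mathrm{Diag}_n = \{\{i,j\} \subseteq [n]: i-j\not\equiv \pm1 \pmod n\}$; two diagonals cross if they meet in the interior of the polygon (their four endpoints are distinct and interleave cyclically). A triangulation is identified with its set of diagonals, and $\mathcal{T}_n$ is the set of triangulations. For a set system $\mathcal{F}$, $\mathrm{KG}(\mathcal{F})$ is the graph on $\mathcal{F}$ with $F,F'$ adjacent iff $F\cap F'=\emptyset$. Swapping relation: for $\{i,j\},\{i',j'\}\in\mathrm{Diag}_n$ written with $i<j$ and $i'<j'$, write $\{i,j\}\rhd\{i',j'\}$ if either $\{i,j\}$ and $\{i',j'\}$ do not cross (in particular $d\rhd d$ for every $d$), or $i'<i<j'<j<n$ and $j'-i>1$. For $T,T'\in\mathcal{T}_n$, write $T\rhd T'$ if $d\rhd d'$ for all $d\in T$ and $d'\in T'$. *)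

From mathcomp Require Import all_boot.
Set Implicit Arguments. Unset Strict Implicit. Unset Printing Implicit Defensive.

(* Vertices of the convex n-gon are labelled 1..n; we use the finite type
   'I_n.+1 (label 0 is never used by a diagonal).  A diagonal {i,j} is
   represented by the ordered pair (i, j) with 1 <= i < j <= n. *)
Definition vtx (n : nat) := 'I_n.+1.
Definition diagT (n : nat) := (vtx n * vtx n)%type.

(* {i,j} with i<j is a diagonal iff i - j is not = +-1 mod n,
   i.e. j - i >= 2 and (i,j) <> (1,n). *)
Definition is_diag (n : nat) (d : diagT n) : bool :=
  let i := nat_of_ord d.1 in let j := nat_of_ord d.2 in
  [&& 1 <= i, i < j, j <= n, 1 < j - i & ~~ ((i == 1) && (j == n))].

Definition cross (n : nat) (d d' : diagT n) : bool :=
  let i := nat_of_ord d.1 in let j := nat_of_ord d.2 in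
  let i' := nat_of_ord d'.1 in let j' := nat_of_ord d'.2 in
  [|| (i < i') && (i' < j) && (j < j') | (i' < i) && (i < j') && (j' < j)].

Definition is_triang (n : nat) (T : {set diagT n}) : Prop :=
  (forall d, d \in T -> is_diag d) /\
  (forall d d', d \in T -> d' \in T -> ~~ cross d d') /\
  (forall d, is_diag d -> d \notin T -> exists2 d', d' \in T & cross d d').

Definition swap_diag (n : nat) (d d' : diagT n) : bool :=
  let i := nat_of_ord d.1 in let j := nat_of_ord d.2 in
  let i' := nat_of_ord d'.1 in let j' := nat_of_ord d'.2 in
  ~~ cross d d' || [&& i' < i, i < j', j' < j, j < n & 1 < j' - i].

Definition swap_triang (n : nat) (T T' : {set diagT n}) : Prop :=
  forall d d', d \in T -> d' \in T' -> swap_diag d d'.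

Definition KG_colorable (T : finType) (F : {set {set T}}) (k : nat) : Prop :=
  exists c : {set T} -> nat,
    (forall A, A \in F -> c A < k) /\
    (forall A B, A \in F -> B \in F -> A != B -> A :&: B = set0 -> c A != c B).

Definition KG_chromatic_number (T : finType) (F : {set {set T}}) (k : nat) : Prop :=
  KG_colorable F k /\ (forall m, m < k -> ~ KG_colorable F m).

(* Colour a triangulation by a neighbour j of vertex 1, or by n if 1 has none:
   disjoint triangulations cannot share (1, j), nor both contain (2, n), so
   this colours KG(T') with n - 2 colours.  Conversely, choosing for every
   triangulation T a member T' of the family with T |> T' turns a colouring of
   KG(T') into a colouring of all triangulations in which T1 and T2 differ as
   soon as no diagonal is a |>-target of both ("separated").  Such colourings
   need n - 2 colours, by induction on n.  A triangulation S of the (n-1)-gon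
   extends in two ways: making the new vertex 1 an ear cut off by (2, n), or
   flipping that diagonal to (1, a + 1), where a is the apex of S on its edge
   (n-1, 1).  Separated S1, S2 have separated extensions except when both make
   1 an ear, and the fan at 1 is separated from every ear extension.  Giving S
   the colour of its flipped extension, or of its ear extension when the former
   has the fan's colour, therefore colours the triangulations of the (n-1)-gon
   with one colour fewer. *)
From mathcomp Require Import all_boot zify.
Set Implicit Arguments. Unset Strict Implicit. Unset Printing Implicit Defensive.

(* Reverts the hypotheses and replaces every vertex label [nat_of_ord x] by a
   natural number below its bound, so that [lia] sees a pure arithmetic goal. *)
Ltac ord_lia :=
  repeat match goal with
  | H : is_true _ |- _ => revert H
  | H : (_ = _ :> nat) |- _ => revert H
  | H : ~ _ |- _ => revert H
  end;
  repeat match goal with |- context [nat_of_ord ?x] =>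
    move: (ltn_ord x); move: (nat_of_ord x) => ? end;
  lia.

Lemma diag_ext n (d d' : diagT n) :
  (d.1 : nat) = d'.1 -> (d.2 : nat) = d'.2 -> d = d'.
Proof. by case: d d' => [a b] [a' b'] /= /val_inj-> /val_inj->. Qed.

Lemma cross_sym n (d d' : diagT n) : cross d d' = cross d' d.
Proof. by rewrite /cross; apply/idP/idP; ord_lia. Qed.

Lemma cross_irrefl n (d : diagT n) : cross d d = false.
Proof. by rewrite /cross; apply/negbTE; ord_lia. Qed.

Lemma no_diag3 (d : diagT 3) : is_diag d = false.
Proof. by rewrite /is_diag; apply/negbTE; ord_lia. Qed.

Section Triangulations.
Variables (n : nat) (T : {set diagT n}).
Hypothesis triT : is_triang T.

Lemma triang_diag d : d \in T -> is_diag d.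
Proof. by case: triT => h _; apply: h. Qed.

Lemma triang_noncross d d' : d \in T -> d' \in T -> ~~ cross d d'.
Proof. by case: triT => _ [h _]; apply: h. Qed.

Lemma triang_max d : is_diag d -> d \notin T -> exists2 d', d' \in T & cross d d'.
Proof. by case: triT => _ [_ h]; apply: h. Qed.

End Triangulations.

Lemma triang3_empty (T : {set diagT 3}) : is_triang T -> T = set0.
Proof.
move=> triT; apply/setP => d; rewrite in_set0.
by apply/negbTE/negP => /(triang_diag triT); rewrite no_diag3.
Qed.

Lemma set0_triang3 : is_triang (set0 : {set diagT 3}).
Proof. by split; [|split] => d; rewrite ?in_set0 ?no_diag3. Qed.

Definition diag13 n : diagT n := (inord 1, inord 3).

Lemma diag13_diag n : 4 <= n -> is_diag (diag13 n).
Proof. by move=> n4; rewrite /is_diag /= !inordK; ord_lia. Qed.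

Lemma triang_neq0 n (T : {set diagT n}) : 4 <= n -> is_triang T -> T != set0.
Proof.
move=> n4 triT; apply/set0Pn.
case: (boolP (diag13 n \in T)) => [|notT]; first by exists (diag13 n).
by have [d dT _] := triang_max triT (diag13_diag n4) notT; exists d.
Qed.

(* [shift] relabels the polygon 1..m as the vertices 2..m+1 of an (m+1)-gon,
   the new vertex 1 being inserted on the edge between m+1 and 2. *)
Definition shift m (d : diagT m) : diagT m.+1 := (lift ord0 d.1, lift ord0 d.2).
Arguments shift {m} d.

Lemma shift_fst m (d : diagT m) : ((shift d).1 : nat) = d.1.+1.
Proof. exact: lift0. Qed.

Lemma shift_snd m (d : diagT m) : ((shift d).2 : nat) = d.2.+1.
Proof. exact: lift0. Qed.

Lemma shift_cross m (d d' : diagT m) : cross (shift d) (shift d') = cross d d'.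
Proof. by rewrite /cross !shift_fst !shift_snd !ltnS. Qed.

Lemma shift_swap m (d d' : diagT m) :
  swap_diag (shift d) (shift d') = swap_diag d d'.
Proof. by rewrite /swap_diag shift_cross !shift_fst !shift_snd !ltnS subSS. Qed.

Lemma shift_diag m (d : diagT m) : is_diag d -> is_diag (shift d).
Proof. by rewrite /is_diag !shift_fst !shift_snd; ord_lia. Qed.

Definition diag2n n : diagT n := (inord 2, ord_max).

Lemma diag2n_fst n : 2 <= n -> ((diag2n n).1 : nat) = 2.
Proof. by move=> n2; rewrite /= inordK //; ord_lia. Qed.

Lemma diag2n_snd n : ((diag2n n).2 : nat) = n.
Proof. by []. Qed.

Lemma diag2n_diag n : 4 <= n -> is_diag (diag2n n).
Proof. by move=> n4; rewrite /is_diag diag2n_fst ?diag2n_snd; ord_lia. Qed.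

Lemma shift_onto m (e : diagT m.+1) : is_diag e -> 2 <= e.1 -> e != diag2n m.+1 ->
  exists2 e0 : diagT m, is_diag e0 & e = shift e0.
Proof.
move=> de e1 ne2n; exists (inord e.1.-1, inord e.2.-1); last first.
  apply: diag_ext; rewrite ?shift_fst ?shift_snd /= inordK //;
    by move: de; rewrite /is_diag; ord_lia.
have ne : ~~ ((e.1 == 2 :> nat) && (e.2 == m.+1 :> nat)).
  apply: contra ne2n => /andP[/eqP h1 /eqP h2]; apply/eqP/diag_ext.
    by rewrite h1 diag2n_fst //; ord_lia.
  by rewrite h2.
by move: de e1 ne; rewrite /is_diag /= !inordK; ord_lia.
Qed.

Lemma cross_shift_triang m (S : {set diagT m}) (e : diagT m.+1) :
  is_triang S -> is_diag e -> 2 <= e.1 -> e != diag2n m.+1 ->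
  e \notin shift @: S -> exists2 d, d \in shift @: S & cross e d.
Proof.
move=> triS de e1 ne2n; have [e0 de0 ->] := shift_onto de e1 ne2n => notS.
have notS0 : e0 \notin S by apply: contra notS => /(imset_f shift).
have [d dS cr] := triang_max triS de0 notS0.
by exists (shift d); [exact: imset_f | rewrite shift_cross].
Qed.

Definition fan1 n : {set diagT n} := [set d | is_diag d && (d.1 == 1 :> nat)].

Lemma fan1_triang n : 4 <= n -> is_triang (fan1 n).
Proof.
move=> n4; split; [|split].
- by move=> d; rewrite inE => /andP[].
- by move=> d d'; rewrite !inE /is_diag /cross; ord_lia.
- move=> d dd; rewrite inE dd /= => d1.
  exists ((inord 1, inord d.1.+1) : diagT n).
    by rewrite inE /is_diag /= !inordK; move: dd; rewrite /is_diag; ord_lia.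
  by rewrite /cross /= !inordK; move: dd; rewrite /is_diag; ord_lia.
Qed.

(* If no diagonal of a triangulation ends at vertex 1, the triangle on the
   edges (n,1) and (1,2) has (2,n) as its third side. *)
Lemma diag2n_in_triang n (T : {set diagT n}) : 4 <= n -> is_triang T ->
  (forall d, d \in T -> d.1 != 1 :> nat) -> diag2n n \in T.
Proof.
move=> n4 triT not1; apply/negPn/negP => notT.
have [d dT] := triang_max triT (diag2n_diag n4) notT.
by move: (not1 _ dT) (triang_diag triT dT); rewrite /cross /is_diag diag2n_fst ?diag2n_snd; ord_lia.
Qed.

Lemma shift_add_triang m (S : {set diagT m}) (x : diagT m.+1) :
  is_triang S -> is_diag x -> (forall d, d \in S -> ~~ cross (shift d) x) ->
  (forall e, is_diag e -> e != x -> (e.1 < 2) || (e == diag2n m.+1) ->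
     exists2 d, d \in shift @: S :|: [set x] & cross e d) ->
  is_triang (shift @: S :|: [set x]).
Proof.
move=> triS dx crx maxx; split; [|split].
- move=> d; rewrite !inE => /orP[/imsetP[d0 d0S ->]|/eqP->] //.
  exact/shift_diag/(triang_diag triS).
- move=> d d'; rewrite !inE.
  case/orP=> [/imsetP[d0 d0S ->]|/eqP->]; case/orP=> [/imsetP[d1 d1S ->]|/eqP->].
  + by rewrite shift_cross (triang_noncross triS).
  + exact: crx.
  + by rewrite cross_sym crx.
  + by rewrite cross_irrefl.
- move=> e de; rewrite !inE negb_or => /andP[notS nex].
  case: (boolP ((e.1 < 2) || (e == diag2n m.+1))) => [|/norP[]]; first exact: maxx.
  rewrite -leqNgt => e1 ne2n; have [d dS cr] := cross_shift_triang triS de e1 ne2n notS.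
  by exists d; rewrite // inE dS.
Qed.

(* Vertex 1 becomes an ear: its triangle is (1, 2, m+1). *)
Definition ear_ext m (S : {set diagT m}) : {set diagT m.+1} :=
  shift @: S :|: [set diag2n m.+1].

Lemma diag2n_in_ear m (S : {set diagT m}) : diag2n m.+1 \in ear_ext S.
Proof. by rewrite !inE eqxx orbT. Qed.

Lemma shift_in_ear m (S : {set diagT m}) d : d \in S -> shift d \in ear_ext S.
Proof. by move=> dS; rewrite !inE imset_f. Qed.

Lemma ear_ext_triang m (S : {set diagT m}) : 3 <= m -> is_triang S -> is_triang (ear_ext S).
Proof.
move=> m3 triS; apply: shift_add_triang => //; first exact: diag2n_diag.
  move=> d dS; have := triang_diag triS dS.
  by rewrite /cross /is_diag shift_fst shift_snd diag2n_fst ?diag2n_snd; ord_lia.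
move=> e de ne2n; rewrite (negbTE ne2n) orbF => e1.
exists (diag2n m.+1); first exact: diag2n_in_ear.
by move: de; rewrite /cross /is_diag diag2n_fst ?diag2n_snd; ord_lia.
Qed.

Definition has_diag m (S : {set diagT m}) (a b : nat) :=
  [exists d in S, (d.1 == a :> nat) && (d.2 == b :> nat)].

Lemma has_diagP m (S : {set diagT m}) a b :
  reflect (exists2 d, d \in S & (d.1 : nat) = a /\ (d.2 : nat) = b) (has_diag S a b).
Proof.
apply: (iffP exists_inP) => [[d dS /andP[/eqP d1 /eqP d2]]|[d dS [<- <-]]].
  by exists d.
by exists d; rewrite ?eqxx.
Qed.

(* The third vertex of the triangle of [S] on the edge (m,1): the largest
   neighbour of vertex 1, or 2 if 1 has no neighbour but 2 and m. *)
Definition apex m (S : {set diagT m}) : nat :=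
  \max_(v in [pred v : 'I_m.+1 | (v == 2 :> nat) || has_diag S 1 v]) v.

Section Apex.
Variables (m : nat) (S : {set diagT m}).

Lemma leq_apex (v : 'I_m.+1) : (v == 2 :> nat) || has_diag S 1 v -> v <= apex S.
Proof. by move=> pv; apply: leq_bigmax_cond. Qed.

Lemma apex_max b : has_diag S 1 b -> b <= apex S.
Proof.
move=> Sb; have b_lt : b < m.+1 by case/has_diagP: Sb => d _ [_ <-].
by have := @leq_apex (inord b); rewrite inordK // Sb orbT; apply.
Qed.

Lemma apex_ge2 : 2 <= m -> 2 <= apex S.
Proof. by move=> m2; have := @leq_apex (inord 2); rewrite inordK ?eqxx //; apply. Qed.

Lemma apex_spec : 2 <= m -> (apex S == 2) || has_diag S 1 (apex S).
Proof.
move=> m2; rewrite /apex; have [|v pv ->] := @eq_bigmax_cond _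
  [pred v : 'I_m.+1 | (v == 2 :> nat) || has_diag S 1 v] (fun v => nat_of_ord v).
  by apply/card_gt0P; exists (inord 2); rewrite inE inordK.
exact: pv.
Qed.

Hypothesis triS : is_triang S.

Lemma apex_lt : 3 <= m -> apex S < m.
Proof.
move=> m3; case/orP: (apex_spec (ltnW m3)) => [/eqP-> //|/has_diagP[d dS [d1 d2]]].
by have := triang_diag triS dS; rewrite /is_diag d1 d2; ord_lia.
Qed.

(* A diagonal with one end on each side of the apex would cross (1, apex). *)
Lemma apex_straddle d : d \in S -> ~~ (d.1 < apex S < d.2).
Proof.
move=> dS; have dd := triang_diag triS dS; apply/negP => /andP[lt1 lt2].
have m2 : 2 <= m by move: dd; rewrite /is_diag; ord_lia.
case: (boolP (d.1 == 1 :> nat)) => [/eqP d1|d1].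
  have : has_diag S 1 d.2 by apply/has_diagP; exists d.
  by move/apex_max; ord_lia.
case/orP: (apex_spec m2) => [/eqP a2|/has_diagP[d' d'S [d1' d2']]].
  by move: lt1 dd d1; rewrite /is_diag a2; ord_lia.
have := triang_noncross triS dS d'S.
by move: lt1 lt2 dd d1; rewrite /cross /is_diag d1' d2'; ord_lia.
Qed.

Lemma apex_opp : 4 <= m -> (apex S == m.-1) || has_diag S (apex S) m.
Proof.
move=> m4; apply/norP => -[ne nS].
have a2 := apex_ge2 (ltnW (ltnW m4)); have am := apex_lt (ltnW m4).
pose d0 : diagT m := (inord (apex S), inord m).
have d01 : (d0.1 : nat) = apex S by rewrite /= inordK //; ord_lia.
have d02 : (d0.2 : nat) = m by rewrite /= inordK.
have dd0 : is_diag d0 by rewrite /is_diag d01 d02; ord_lia.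
have notS : d0 \notin S by apply: contra nS => S0; apply/has_diagP; exists d0.
have [d dS cr] := triang_max triS dd0 notS.
have := apex_straddle dS; have := triang_diag triS dS.
by move: cr; rewrite /cross /is_diag d01 d02; ord_lia.
Qed.

End Apex.

(* The diagonal (1, apex + 1) of the (m+1)-gon, flipped from (2, m+1). *)
Definition apex_diag m (S : {set diagT m}) : diagT m.+1 := (inord 1, inord (apex S).+1).

Definition apex_ext m (S : {set diagT m}) : {set diagT m.+1} :=
  shift @: S :|: [set apex_diag S].

Lemma apex_diag_in_ext m (S : {set diagT m}) : apex_diag S \in apex_ext S.
Proof. by rewrite !inE eqxx orbT. Qed.

Lemma shift_in_apex_ext m (S : {set diagT m}) d : d \in S -> shift d \in apex_ext S.
Proof. by move=> dS; rewrite !inE imset_f. Qed.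

Section ApexExtension.
Variables (m : nat) (S : {set diagT m}).
Hypotheses (m4 : 4 <= m) (triS : is_triang S).

Lemma apex_diag_fst : ((apex_diag S).1 : nat) = 1.
Proof. by rewrite /= inordK. Qed.

Lemma apex_diag_snd : ((apex_diag S).2 : nat) = (apex S).+1.
Proof. by have am := apex_lt triS (ltnW m4); rewrite /= inordK //; ord_lia. Qed.

Lemma apex_ext_triang : is_triang (apex_ext S).
Proof.
have a2 := apex_ge2 S (ltnW (ltnW m4)); have am := apex_lt triS (ltnW m4).
have [a1 a2n] := (apex_diag_fst, apex_diag_snd).
apply: shift_add_triang => //.
- by rewrite /is_diag a1 a2n; ord_lia.
- move=> d dS; have := apex_straddle triS dS; have := triang_diag triS dS.
  by rewrite /cross /is_diag shift_fst shift_snd a1 a2n; ord_lia.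
move=> e de nea /orP[e1|/eqP->]; last first.
  exists (apex_diag S); first exact: apex_diag_in_ext.
  by rewrite /cross a1 a2n diag2n_fst ?diag2n_snd; ord_lia.
have ne2 : (e.2 : nat) != (apex S).+1.
  apply: contra nea => /eqP e2; apply/eqP/diag_ext; rewrite ?a1 ?a2n //.
  by move: de e1; rewrite /is_diag; ord_lia.
case: (ltnP e.2 (apex S).+1) => e2.
  case/orP: (apex_spec S (ltnW (ltnW m4))) => [/eqP a2'|/has_diagP[d dS [d1 d2]]].
    by move: de e1 e2; rewrite /is_diag a2'; ord_lia.
  exists (shift d); first exact: shift_in_apex_ext.
  by move: de e1 e2 ne2; rewrite /cross /is_diag shift_fst shift_snd d1 d2; ord_lia.
case/orP: (apex_opp triS m4) => [/eqP am'|/has_diagP[d dS [d1 d2]]].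
  by move: de e1 e2 ne2; rewrite /is_diag am'; ord_lia.
exists (shift d); first exact: shift_in_apex_ext.
by move: de e1 e2 ne2; rewrite /cross /is_diag shift_fst shift_snd d1 d2; ord_lia.
Qed.

End ApexExtension.

Definition swap_separated n (T1 T2 : {set diagT n}) := forall e, is_diag e ->
  {in T1, forall d, swap_diag d e} -> {in T2, forall d, swap_diag d e} -> False.

Lemma swap_separated_sym n (T1 T2 : {set diagT n}) :
  swap_separated T1 T2 -> swap_separated T2 T1.
Proof. by move=> sep e de s1 s2; apply: (sep e). Qed.

Lemma diag2n_swapN n (e : diagT n) : 4 <= n -> is_diag e -> e.1 < 2 ->
  swap_diag (diag2n n) e = false.
Proof.
by move=> n4 de e1; move: de; rewrite /swap_diag /cross /is_diag diag2n_fst ?diag2n_snd; ord_lia.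
Qed.

Lemma apex_diag_swapN m (S : {set diagT m}) : 4 <= m -> is_triang S ->
  swap_diag (apex_diag S) (diag2n m.+1) = false.
Proof.
move=> m4 triS; have := apex_ge2 S (ltnW (ltnW m4)); have := apex_lt triS (ltnW m4).
by rewrite /swap_diag /cross apex_diag_fst (apex_diag_snd m4 triS) diag2n_fst ?diag2n_snd; ord_lia.
Qed.

Lemma fan1_ear_separated m (S : {set diagT m}) : 3 <= m ->
  swap_separated (fan1 m.+1) (ear_ext S).
Proof.
move=> m3 e de sF sE; case: (ltnP e.1 2) => e1.
  by have := sE _ (diag2n_in_ear S); rewrite diag2n_swapN.
pose d : diagT m.+1 := (inord 1, inord e.1.+1).
have d1 : (d.1 : nat) = 1 by rewrite /= inordK.
have d2 : (d.2 : nat) = e.1.+1 by rewrite /= inordK //; move: de; rewrite /is_diag; ord_lia.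
have := sF d; rewrite /swap_diag /cross inE /is_diag d1 d2 eqxx andbT.
by move: de e1; rewrite /is_diag; ord_lia.
Qed.

Lemma shift_separated m (S1 S2 : {set diagT m}) (T1 T2 : {set diagT m.+1}) e :
  swap_separated S1 S2 ->
  {homo shift : d / d \in S1 >-> d \in T1} -> {homo shift : d / d \in S2 >-> d \in T2} ->
  is_diag e -> 2 <= e.1 -> e != diag2n m.+1 ->
  {in T1, forall d, swap_diag d e} -> {in T2, forall d, swap_diag d e} -> False.
Proof.
move=> sep sub1 sub2 de e1 ne2n; have [e0 de0 ->] := shift_onto de e1 ne2n.
by move=> s1 s2; apply: (sep e0 de0) => d dS; rewrite -shift_swap; [apply/s1/sub1 | apply/s2/sub2].
Qed.

Section ExtensionSeparation.
Variables (m : nat) (S1 S2 : {set diagT m}).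
Hypotheses (m4 : 4 <= m) (triS1 : is_triang S1).

Lemma apex_ear_separated :
  swap_separated S1 S2 -> swap_separated (apex_ext S1) (ear_ext S2).
Proof.
move=> sep e de s1 s2; case: (ltnP e.1 2) => e1.
  by have := s2 _ (diag2n_in_ear S2); rewrite diag2n_swapN //; ord_lia.
case: (eqVneq e (diag2n m.+1)) => [ee|ne2n].
  by have := s1 _ (apex_diag_in_ext S1); rewrite ee apex_diag_swapN.
exact: (shift_separated sep (@shift_in_apex_ext _ _) (@shift_in_ear _ _) de e1 ne2n s1 s2).
Qed.

Hypothesis triS2 : is_triang S2.

Lemma apex_apex_separated :
  swap_separated S1 S2 -> swap_separated (apex_ext S1) (apex_ext S2).
Proof.
move=> sep e de s1 s2; case: (ltnP e.1 2) => e1; last first.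
  case: (eqVneq e (diag2n m.+1)) => [ee|ne2n].
    by have := s1 _ (apex_diag_in_ext S1); rewrite ee apex_diag_swapN.
  exact: (shift_separated sep (@shift_in_apex_ext _ _) (@shift_in_apex_ext _ _) de e1 ne2n s1 s2).
case: (ltnP e.2 4) => e2.
  (* e = (1, 3): no diagonal of S1, S2 leaves vertex 1, so both contain (2, m) *)
  have in2n S : is_triang S -> {in apex_ext S, forall d, swap_diag d e} -> diag2n m \in S.
    move=> triS sS; apply: diag2n_in_triang => // d dS; apply/negP => /eqP d1.
    have := sS _ (shift_in_apex_ext dS); have := triang_diag triS dS.
    by move: de e1 e2 d1; rewrite /swap_diag /cross /is_diag shift_fst shift_snd; ord_lia.
  have in1 := in2n _ triS1 s1; have in2 := in2n _ triS2 s2.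
  apply: (sep _ (diag2n_diag m4)) => d dS; rewrite /swap_diag.
    by rewrite (triang_noncross triS1 dS in1).
  by rewrite (triang_noncross triS2 dS in2).
(* e = (1, j) with j > 3, and S1, S2 both swap into (1, j - 1) *)
pose e0 : diagT m := (inord 1, inord e.2.-1).
have e01 : (e0.1 : nat) = 1 by rewrite /= inordK //; ord_lia.
have e02 : (e0.2 : nat) = e.2.-1 by rewrite /= inordK //; move: de; rewrite /is_diag; ord_lia.
have de0 : is_diag e0 by move: de e1 e2; rewrite /is_diag e01 e02; ord_lia.
have swap_down S : is_triang S -> {in apex_ext S, forall d, swap_diag d e} ->
    {in S, forall d, swap_diag d e0}.
  move=> triS sS d dS; have := sS _ (shift_in_apex_ext dS); have := triang_diag triS dS.
  by move: de e1 e2; rewrite /swap_diag /cross /is_diag shift_fst shift_snd e01 e02; ord_lia.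
exact: (sep e0 de0 (swap_down _ triS1 s1) (swap_down _ triS2 s2)).
Qed.

End ExtensionSeparation.

Definition sep_coloring n (c : {set diagT n} -> nat) k :=
  (forall T, is_triang T -> c T < k) /\
  (forall T1 T2, is_triang T1 -> is_triang T2 -> swap_separated T1 T2 -> c T1 != c T2).

Lemma sep_coloring4 (c : {set diagT 4} -> nat) k : sep_coloring c k -> 2 <= k.
Proof.
case=> ck cne; have triF := fan1_triang (leqnn 4).
have triE := ear_ext_triang (leqnn 3) set0_triang3.
have := cne _ _ triF triE (fan1_ear_separated (leqnn 3)).
by have := ck _ triF; have := ck _ triE; lia.
Qed.

Definition squeeze a x := if x < a then x else x.-1.

Lemma squeeze_lt a x k : a < k -> x < k -> x != a -> squeeze a x < k.-1.
Proof. by rewrite /squeeze; case: ifP; lia. Qed.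

Lemma squeeze_neq a x y : x != a -> y != a -> x != y -> squeeze a x != squeeze a y.
Proof. by rewrite /squeeze; case: ifP; case: ifP; lia. Qed.

Lemma sep_coloring_step m (c : {set diagT m.+1} -> nat) k : 4 <= m ->
  sep_coloring c k -> exists c' : {set diagT m} -> nat, sep_coloring c' k.-1.
Proof.
move=> m4 [ck cne]; have m3 := ltnW m4; have triF := fan1_triang (leqW m4).
set a := c (fan1 m.+1).
pose ext S := if c (apex_ext S) != a then apex_ext S else ear_ext S.
have ext_triang S : is_triang S -> is_triang (ext S).
  by move=> triS; rewrite /ext; case: ifP => _; [apply: apex_ext_triang | apply: ear_ext_triang].
have ext_neq S : is_triang S -> c (ext S) != a.
  move=> triS; rewrite /ext; case: ifP => // _; rewrite eq_sym.
  exact: cne triF (ear_ext_triang m3 triS) (fan1_ear_separated m3).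
exists (fun S => squeeze a (c (ext S))); split => [S triS | S1 S2 tri1 tri2 sep].
  exact: squeeze_lt (ck _ triF) (ck _ (ext_triang _ triS)) (ext_neq _ triS).
apply: squeeze_neq; rewrite ?ext_neq //.
have sepA := apex_apex_separated m4 tri1 tri2 sep.
have triA1 := apex_ext_triang m4 tri1; have triA2 := apex_ext_triang m4 tri2.
have triE1 := ear_ext_triang m3 tri1; have triE2 := ear_ext_triang m3 tri2.
rewrite /ext; case: ifP => a1; case: ifP => a2.
- exact: cne sepA.
- exact: cne (apex_ear_separated m4 tri1 sep).
- by rewrite eq_sym; apply: cne (apex_ear_separated m4 tri2 (swap_separated_sym sep)).
- by move: (cne _ _ triA1 triA2 sepA); rewrite (eqP (negbFE a1)) (eqP (negbFE a2)) eqxx.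
Qed.

Lemma sep_coloring_lb n (c : {set diagT n} -> nat) k :
  4 <= n -> sep_coloring c k -> n - 2 <= k.
Proof.
elim: n c k => // n IH c k n4 colc; case: (ltnP 4 n.+1) => [n5|n4'].
  have [c' colc'] := sep_coloring_step n5 colc.
  by have := IH c' k.-1 n5 colc'; lia.
have n3 : n = 3 by lia.
by subst n; have := sep_coloring4 colc.
Qed.

Lemma swap_separated_disjoint n (T1 T2 T1' T2' : {set diagT n}) :
  swap_separated T1 T2 -> swap_triang T1 T1' -> swap_triang T2 T2' ->
  {in T1', forall d, is_diag d} -> T1' :&: T2' = set0.
Proof.
move=> sep s1 s2 diagT1'; apply/setP => e; rewrite inE in_set0.
apply/negbTE/andP => -[e1 e2].
by apply: (sep e (diagT1' e e1)) => d dT; [apply: s1 | apply: s2].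
Qed.

Lemma dominating_choice n (Tp : {set {set diagT n}}) :
  (forall T, is_triang T -> exists2 T', T' \in Tp & swap_triang T T') ->
  exists f, forall T, is_triang T -> f T \in Tp /\ swap_triang T (f T).
Proof.
pose f (T : {set diagT n}) :=
  odflt set0 [pick T' in Tp | [forall d in T, forall d' in T', swap_diag d d']].
move=> domTp; exists f => T triT; rewrite /f; case: pickP => [T' /andP[T'Tp /forall_inP sw]|none].
  by split=> // d d' dT d'T'; apply: (forall_inP (sw d dT)).
have [T' T'Tp sw] := domTp _ triT; have := none T'; rewrite T'Tp /=.
by move/negP; case; apply/forall_inP => d dT; apply/forall_inP => d' d'T'; apply: sw.
Qed.

Lemma kneser_sep_coloring n (Tp : {set {set diagT n}}) (col : {set diagT n} -> nat) k :
  4 <= n -> {in Tp, forall T, is_triang T} ->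
  (forall T, is_triang T -> exists2 T', T' \in Tp & swap_triang T T') ->
  (forall A, A \in Tp -> col A < k) ->
  (forall A B, A \in Tp -> B \in Tp -> A != B -> A :&: B = set0 -> col A != col B) ->
  exists c : {set diagT n} -> nat, sep_coloring c k.
Proof.
move=> n4 triTp domTp colk colp; have [f fP] := dominating_choice domTp.
exists (col \o f); split => [T /fP[fT _] | T1 T2 tri1 tri2 sep]; first exact: colk.
have [[fT1 s1] [fT2 s2]] := (fP _ tri1, fP _ tri2).
have disj := swap_separated_disjoint sep s1 s2 (@triang_diag _ _ (triTp _ fT1)).
apply: (colp _ _ fT1 fT2 _ disj); apply: contraNneq (triang_neq0 n4 (triTp _ fT1)) => eqf.
by rewrite -[f T1]setIid {2}eqf disj.
Qed.

Definition fan_color n (A : {set diagT n}) : nat :=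
  if [pick j : 'I_n.+1 | has_diag A 1 j] is Some j then j - 3 else n - 3.

Lemma fan_colorable n (Tp : {set {set diagT n}}) :
  3 <= n -> {in Tp, forall T, is_triang T} -> KG_colorable Tp (n - 2).
Proof.
move=> n3 triTp; exists (@fan_color n).
have range A j : A \in Tp -> has_diag A 1 j -> 3 <= j < n.
  move=> /triTp triA /has_diagP[d dA [d1 d2]].
  by have := triang_diag triA dA; rewrite /is_diag d1 d2; ord_lia.
split=> [A ATp | A B ATp BTp neAB disj]; rewrite /fan_color.
  by case: pickP => [j /(range _ _ ATp)|_]; lia.
have common e : e \in A -> e \in B -> False.
  by move=> eA eB; have := in_setI e A B; rewrite disj in_set0 eA eB.
case: pickP => [j jA|noA]; case: pickP => [j' j'B|noB].
- have := range _ _ ATp jA; have := range _ _ BTp j'B.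
  case/has_diagP: jA => d dA [d1 d2]; case/has_diagP: j'B => d' dB [d1' d2'].
  move=> r' r; apply/negP => /eqP eqj; apply: (common d dA).
  by rewrite (@diag_ext _ d d') // ?d1 ?d1' ?d2 ?d2'; lia.
- by have := range _ _ ATp jA; lia.
- by have := range _ _ BTp j'B; lia.
have no1 (C : {set diagT n}) : (forall j : 'I_n.+1, has_diag C 1 j = false) ->
    forall d, d \in C -> d.1 != 1 :> nat.
  move=> noC d dC; apply/eqP => d1; suff : has_diag C 1 d.2 by rewrite noC.
  by apply/has_diagP; exists d.
have [triA triB] := (triTp _ ATp, triTp _ BTp).
case: (ltnP 3 n) => [n4|n3'].
  by case: (common (diag2n n)); apply: diag2n_in_triang => //; apply: no1.
have n3e : n = 3 by lia.
by subst n; move: neAB; rewrite (triang3_empty triA) (triang3_empty triB) eqxx.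
Qed.

Theorem lemma3p3 (n : nat) (Tp : {set {set diagT n}}) :
  3 <= n ->
  (forall T, T \in Tp -> is_triang T) ->
  (forall T : {set diagT n}, is_triang T ->
     exists2 T', T' \in Tp & swap_triang T T') ->
  KG_chromatic_number Tp (n - 2).
Proof.
move=> n3 triTp domTp; split=> [|k ltk [col [colk colp]]]; first exact: fan_colorable.
case: (ltnP 3 n) => [n4|n3'].
  have [c colc] := kneser_sep_coloring n4 triTp domTp colk colp.
  by have := sep_coloring_lb n4 colc; lia.
have n3e : n = 3 by lia.
subst n; have [T' T'Tp _] := domTp _ set0_triang3.
by have := colk _ T'Tp; lia.
Qed.
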